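(* Let $(M,\cdot,1)$ be a monoid without a zero element, $\Sigma$ a finite alphabet, $(g_h,h)$ a maximal factorization on $L$, and $\ell\in L$. If $N^{(g_h,h)}(h(\ell),g_h(\ell))$ is an $M$-DFA (i.e. its state set $\{S^{(g_h,h)}_\alpha(h(\ell))\mid\alpha\in\Sigma^*\}$ is finite), then it is a minimal $M$-DFA recognizing $\ell$.
   Context: $L$ is the set of all functions $\Sigma^*\to M$; $\varepsilon$ the empty word; $(m\cdot\ell)(\gamma)=m\cdot\ell(\gamma)$; $\Delta_\alpha(\ell)(\gamma)=\ell(\alpha\gamma)$. A factorization on $L$ is a pair $g:L\to M$, $f:L\to L$ with $g(\ell)\cdot f(\ell)=\ell$ for all $\ell$. A maximal factorization is a factorization $(g_h,h)$ with $h(m\cdot\ell)=h(\ell)$ for all $\ell\in L$, $m\in M$. Define $S^{(g,f)}_\varepsilon=\mathrm{id}_L$, $S^{(g,f)}_{\alpha\sigma}=f\circ\Delta_\sigma\circ S^{(g,f)}_\alpha$. $N^{(g,f)}(\ell,m)$ is the automaton with states $S^{(g,f)}_\alpha(\ell)$ ($\alpha\in\Sigma^*$), initial state $\ell$, initial value $m$, $\delta(S^{(g,f)}_\alpha(\ell),\sigma)=S^{(g,f)}_{\alpha\sigma}(\ell)$, $w(S^{(g,f)}_\alpha(\ell),\sigma)=g(\Delta_\sigma(S^{(g,f)}_\alpha(\ell)))$, $\rho(S^{(g,f)}_\alpha(\ell))=(S^{(g,f)}_\alpha(\ell))(\varepsilon)$. An $M$-DFA is $(Q,\Sigma,u,i_u,\delta,w,\rho)$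 with $Q$ finite nonempty, initial state $u$, initial value $i_u$, $\delta:Q\times\Sigma\to Q$, $w:Q\times\Sigma\to M$, $\rho:Q\to M$; with $q\alpha$ the extended transition and $w^*(q,\varepsilon)=1$, $w^*(q,\alpha\sigma)=w^*(q,\alpha)\cdot w(q\alpha,\sigma)$, it recognizes $\alpha\mapsto i_u\cdot w^*(u,\alpha)\cdot\rho(u\alpha)$. Minimal: no $M$-DFA recognizing the same language has fewer states. *)

From mathcomp Require Import all_boot.
Set Implicit Arguments. Unset Strict Implicit. Unset Printing Implicit Defensive.

Section Defs.
Variables (M : Type) (mul : M -> M -> M) (Sigma : finType).

Definition lang := seq Sigma -> M.

Definition lscale (m : M) (l : lang) : lang := fun gamma => mul m (l gamma).

Definition Delta (a : seq Sigma) (l : lang) : lang := fun gamma => l (a ++ gamma).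

Definition is_factorization (g : lang -> M) (f : lang -> lang) : Prop :=
  forall l, lscale (g l) (f l) = l.

Definition is_maximal_factorization (g : lang -> M) (h : lang -> lang) : Prop :=
  is_factorization g h /\ forall l m, h (lscale m l) = h l.

Definition S (f : lang -> lang) (alpha : seq Sigma) (l : lang) : lang :=
  foldl (fun l' s => f (Delta [:: s] l')) l alpha.

Lemma S_rcons f alpha s l : S f (rcons alpha s) l = f (Delta [:: s] (S f alpha l)).
Proof. by rewrite /S -cats1 foldl_cat. Qed.

(** A (possibly infinite-state) deterministic automaton with weights in M. *)
Record automaton := Automaton {
  st : Type;
  init : st;
  ival : M;
  dlt : st -> Sigma -> st;
  wt : st -> Sigma -> M;
  rho : st -> M }.

Variable one : M.

Definition run (A : automaton) (q : st A) (alpha : seq Sigma) : st A :=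
  foldl (@dlt A) q alpha.

(** w*(q,eps) = 1, w*(q, alpha sigma) = w*(q,alpha) . w(q alpha, sigma) *)
Fixpoint wstar_rev (A : automaton) (q : st A) (ra : seq Sigma) : M :=
  match ra with
  | [::] => one
  | s :: ra' => mul (wstar_rev q ra') (wt (run q (rev ra')) s)
  end.
Definition wstar (A : automaton) (q : st A) (alpha : seq Sigma) : M :=
  wstar_rev q (rev alpha).

Definition recognized (A : automaton) : lang :=
  fun alpha => mul (mul (ival A) (wstar (init A) alpha)) (rho (run (init A) alpha)).

Definition nstates (A : automaton) (n : nat) : Prop :=
  exists e : 'I_n -> st A, bijective e.

Definition is_MDFA (A : automaton) : Prop := exists n, nstates A n.

Definition minimal_MDFA (A : automaton) : Prop :=
  is_MDFA A /\
  forall (B : automaton) n m, nstates A n -> nstates B m ->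
    recognized B = recognized A -> n <= m.

Definition Nstate (f : lang -> lang) (l0 : lang) :=
  {q : lang | exists alpha, q = S f alpha l0}.

Lemma Nstate_init f l0 : exists alpha, l0 = S f alpha l0.
Proof. by exists [::]. Qed.

Lemma Nstate_step f l0 (q : lang) s :
  (exists alpha, q = S f alpha l0) ->
  exists alpha, f (Delta [:: s] q) = S f alpha l0.
Proof. by case=> alpha ->; exists (rcons alpha s); rewrite S_rcons. Qed.

Definition Naut (g : lang -> M) (f : lang -> lang) (l0 : lang) (m0 : M) : automaton :=
  @Automaton (Nstate f l0)
    (exist _ l0 (Nstate_init f l0))
    m0
    (fun q s => exist _ (f (Delta [:: s] (sval q))) (Nstate_step s (svalP q)))
    (fun q s => g (Delta [:: s] (sval q)))
    (fun q => sval q [::]).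

End Defs.

(* Every state [q] of [N^(g,f)(l0, m0)] recognizes [q] itself, by the factorization
   identity [g q' . f q' = q'] applied along the word; so [N] recognizes [m0 . l0],
   which is [l] for [(l0, m0) = (h l, g_h l)].  When [h] is maximal, [h] forgets scalar
   factors and [Delta_s] commutes with them, so the state reached by [alpha] is
   [h (Delta_alpha l)].  Any automaton [B] recognizing [l] writes [Delta_alpha l] as a
   scalar multiple of the language of the state it reaches, so that state determines
   the state of [N]; as every state of [N] is reachable, this embeds the states of [N]
   into those of [B]. *)

From mathcomp Require Import all_boot.
From Stdlib Require Import ProofIrrelevance ClassicalEpsilon FunctionalExtensionality.

Set Implicit Arguments.
Unset Strict Implicit.
Unset Printing Implicit Defensive.

Section Automata.
Variables (M : Type) (Sigma : finType).

Implicit Types (A : automaton M Sigma) (alpha beta : seq Sigma).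

Lemma run_rcons A (q : st A) alpha s : run q (rcons alpha s) = dlt (run q alpha) s.
Proof. by rewrite /run -cats1 foldl_cat. Qed.

Lemma run_cat A (q : st A) alpha beta : run q (alpha ++ beta) = run (run q alpha) beta.
Proof. by rewrite /run foldl_cat. Qed.

Lemma leq_nstates_reachable A (B : automaton M Sigma) n m :
  (forall q : st A, exists alpha, q = run (init A) alpha) ->
  (forall alpha beta, run (init B) alpha = run (init B) beta ->
                      run (init A) alpha = run (init A) beta) ->
  nstates A n -> nstates B m -> n <= m.
Proof.
move=> reachA runAB [eA /bij_inj eA_inj] [eB [eB' _ eBK]].
pose word q := proj1_sig (constructive_indefinite_description _ (reachA q)).
have wordP q : q = run (init A) (word q).
  by rewrite /word; case: constructive_indefinite_description.
pose F (i : 'I_n) := eB' (run (init B) (word (eA i))).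
have F_inj : injective F.
  move=> i j /(can_inj eBK) /runAB; rewrite -!wordP; exact: eA_inj.
by have := leq_card F F_inj; rewrite !card_ord.
Qed.

Section Naut.
Variables (g : lang M Sigma -> M) (f : lang M Sigma -> lang M Sigma).
Variables (l0 : lang M Sigma) (m0 : M).

Let N := Naut g f l0 m0.

Lemma Naut_state_inj (q q' : st N) : sval q = sval q' -> q = q'.
Proof. by move=> eqq; apply: eq_sig_hprop => // x; apply: proof_irrelevance. Qed.

Lemma Naut_run alpha : sval (run (init N) alpha) = S f alpha l0.
Proof. by elim/last_ind: alpha => [|alpha s IH] //; rewrite S_rcons run_rcons /= IH. Qed.

Lemma Naut_reachable (q : st N) : exists alpha, q = run (init N) alpha.
Proof.
case: (svalP q) => alpha q_alpha; exists alpha.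
by apply: Naut_state_inj; rewrite Naut_run.
Qed.

End Naut.

End Automata.

Section WeightedAutomata.
Variables (M : Type) (mul : M -> M -> M) (one : M).
Hypothesis mulA : forall a b c, mul a (mul b c) = mul (mul a b) c.
Hypothesis mul1m : forall a, mul one a = a.
Hypothesis mulm1 : forall a, mul a one = a.
Variable Sigma : finType.

Implicit Types (A : automaton M Sigma) (alpha beta : seq Sigma).

Lemma wstar_rcons A (q : st A) alpha s :
  wstar mul one q (rcons alpha s) = mul (wstar mul one q alpha) (wt (run q alpha) s).
Proof. by rewrite /wstar rev_rcons /= revK. Qed.

Lemma wstar_cat A (q : st A) alpha beta :
  wstar mul one q (alpha ++ beta) =
  mul (wstar mul one q alpha) (wstar mul one (run q alpha) beta).
Proof.
elim/last_ind: beta => [|beta s IH]; first by rewrite cats0 mulm1.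
by rewrite -rcons_cat !wstar_rcons IH run_cat mulA.
Qed.

Definition state_lang A (q : st A) : lang M Sigma :=
  fun gamma => mul (wstar mul one q gamma) (rho (run q gamma)).

Lemma recognized_state_lang A :
  recognized mul one A = lscale mul (ival A) (state_lang (init A)).
Proof. by apply: functional_extensionality => gamma; rewrite /lscale mulA. Qed.

Lemma Delta_lscale (m : M) (l : lang M Sigma) alpha :
  Delta alpha (lscale mul m l) = lscale mul m (Delta alpha l).
Proof. by []. Qed.

Lemma Delta_state_lang A (q : st A) alpha :
  Delta alpha (state_lang q) =
  lscale mul (wstar mul one q alpha) (state_lang (run q alpha)).
Proof.
apply: functional_extensionality => gamma.
by rewrite /Delta /lscale /state_lang wstar_cat run_cat mulA.
Qed.

Lemma state_lang_cons A (q : st A) s gamma :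
  state_lang q (s :: gamma) = mul (wt q s) (state_lang (dlt q s) gamma).
Proof.
have := congr1 (fun l => l gamma) (Delta_state_lang q [:: s]).
by rewrite /lscale /wstar /= mul1m.
Qed.

Section Factorization.
Variables (g : lang M Sigma -> M) (f : lang M Sigma -> lang M Sigma).
Hypothesis gf_fact : is_factorization mul g f.
Variables (l0 : lang M Sigma) (m0 : M).

Let N := Naut g f l0 m0.

Lemma state_lang_Naut (q : st N) : state_lang q = sval q.
Proof.
apply: functional_extensionality => gamma; elim: gamma q => [|s gamma IH] q.
  by rewrite /state_lang /= mul1m.
rewrite state_lang_cons IH /=.
exact: (congr1 (fun l => l gamma) (gf_fact (Delta [:: s] (sval q)))).
Qed.

Lemma recognized_Naut : recognized mul one N = lscale mul m0 l0.
Proof. by rewrite recognized_state_lang state_lang_Naut. Qed.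

End Factorization.

Section MaximalFactorization.
Variables (g : lang M Sigma -> M) (h : lang M Sigma -> lang M Sigma).
Hypothesis hmax : is_maximal_factorization mul g h.

Lemma h_lscale (m : M) (l : lang M Sigma) : h (lscale mul m l) = h l.
Proof. by case: hmax. Qed.

Lemma h_Delta_h alpha (l : lang M Sigma) : h (Delta alpha (h l)) = h (Delta alpha l).
Proof. by case: hmax => hfact _; rewrite -{2}(hfact l) Delta_lscale h_lscale. Qed.

Lemma S_h_Delta alpha (l : lang M Sigma) : S h alpha (h l) = h (Delta alpha l).
Proof.
elim/last_ind: alpha => [|alpha s IH] //.
rewrite S_rcons IH h_Delta_h; congr h.
by apply: functional_extensionality => gamma; rewrite /Delta cat_rcons.
Qed.

Lemma h_Delta_recognized (B : automaton M Sigma) alpha :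
  h (Delta alpha (recognized mul one B)) = h (state_lang (run (init B) alpha)).
Proof. by rewrite recognized_state_lang Delta_lscale Delta_state_lang !h_lscale. Qed.

Lemma Naut_run_determined (l : lang M Sigma) (m0 : M) (B : automaton M Sigma) :
  recognized mul one B = l ->
  forall alpha beta, run (init B) alpha = run (init B) beta ->
    run (init (Naut g h (h l) m0)) alpha = run (init (Naut g h (h l) m0)) beta.
Proof.
move=> recB alpha beta runB; apply: Naut_state_inj.
by rewrite !Naut_run !S_h_Delta -recB !h_Delta_recognized runB.
Qed.

End MaximalFactorization.

End WeightedAutomata.

Theorem mainTheorem12
  (M : Type) (mul : M -> M -> M) (one : M)
  (mulA : forall a b c, mul a (mul b c) = mul (mul a b) c)
  (mul1m : forall a, mul one a = a)
  (mulm1 : forall a, mul a one = a)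
  (no_zero : ~ exists z : M, forall a, mul z a = z /\ mul a z = z)
  (Sigma : finType)
  (g : lang M Sigma -> M) (h : lang M Sigma -> lang M Sigma)
  (hmax : is_maximal_factorization mul g h)
  (l : lang M Sigma) :
  is_MDFA (Naut g h (h l) (g l)) ->
  recognized mul one (Naut g h (h l) (g l)) = l /\
  minimal_MDFA mul one (Naut g h (h l) (g l)).
Proof.
move=> N_MDFA; have [hfact _] := hmax.
have recN : recognized mul one (Naut g h (h l) (g l)) = l.
  by rewrite (recognized_Naut mulA mul1m mulm1) // hfact.
split=> //; split=> // B n m nN mB recB.
apply: (leq_nstates_reachable _ _ nN mB).
  exact: Naut_reachable.
by apply: (Naut_run_determined mulA mulm1 hmax); rewrite recB.
Qed.
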